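(* For every integer $N\ge16$ there is $C<\infty$ such that: (a) for every interval $Q$, $\int_Q M(\mathbf 1_Q\widehat{\dot\sigma})^2\,d\widehat\omega\le C\,\widehat{\dot\sigma}(Q)$, where $M\mu(x)=\sup_{J\ni x}\mu(J)/|J|$ (sup over intervals $J$ containing $x$); and (b) for every interval $I_0$ and every decomposition $I_0=\bigcup_{r\ge1}I_r$ into pairwise disjoint intervals, $\sum_{r\ge1}\widehat\omega(I_r)\,\mathrm P(I_r,\mathbf 1_{I_0}\widehat{\dot\sigma})^2\le C\,\widehat{\dot\sigma}(I_0)$.
   Context: $\mathrm P(I,\mu)=\int_{\mathbb R}\frac{|I|}{(|I|+\operatorname{dist}(x,I))^2}\,d\mu(x)$. Cantor intervals: fix an integer $N\ge16$. Set $I^0_1=[0,1]$. Each interval $I=[a,a+N^{-k}]$ of generation $k$ has two children of generation $k+1$: the left child $I_-=[a,a+N^{-k-1}]$ and the right child $I_+=[a+N^{-k}-N^{-k-1},a+N^{-k}]$. The $2^k$ intervals of generation $k$ are denoted $I^k_j$, $1\le j\le 2^k$, numbered left to right; $\mathcal D$ is the collection of all of them. $\dot z^k_j$ is the center of $I^k_j$. The Cantor set is $\mathsf E^{(N)}=\bigcap_{k}\bigcup_{j}I^k_j$. Redistributed Cantor measure: with $\eta=1/N$, $\widehat\omega$ is the unique Borel probability measure supported on $\mathsf E^{(N)}$ such that $\widehat\omega(I^1_1)=\widehat\omega(I^1_2)=\frac12$ and for every $I\in\mathcal D$ of generation $\ge1$: if $I$ is the left child of its parent then $\widehat\omega(I_-)=\frac{1+\eta}2\widehat\omega(I)$,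 $\widehat\omega(I_+)=\frac{1-\eta}2\widehat\omega(I)$; if $I$ is the right child of its parent then $\widehat\omega(I_-)=\frac{1-\eta}2\widehat\omega(I)$, $\widehat\omega(I_+)=\frac{1+\eta}2\widehat\omega(I)$. Weights: $\widehat s^k_j=N^{-2k}/\widehat\omega(I^k_j)$; $\widehat{\dot\sigma}=\sum_{k\ge0}\sum_{j=1}^{2^k}\widehat s^k_j\,\delta_{\dot z^k_j}$. *)

From Stdlib Require Import Reals Lra List Classical ClassicalEpsilon.
Import ListNotations.
Open Scope R_scope.

Definition ind (P : Prop) : R :=
  if excluded_middle_informative P then 1 else 0.

Definition lsum {A : Type} (f : A -> R) (l : list A) : R :=
  fold_right (fun a acc => f a + acc) 0 l.

Record interval := mkInterval {
  lo : R; hi : R; lo_closed : bool; hi_closed : bool }.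

Definition in_ival (I : interval) (x : R) : Prop :=
  (if lo_closed I then lo I <= x else lo I < x) /\
  (if hi_closed I then x <= hi I else x < hi I).

Definition nondeg (I : interval) : Prop := lo I < hi I.

Definition len (I : interval) : R := hi I - lo I.

Definition dist_int (x : R) (I : interval) : R :=
  if Rlt_dec x (lo I) then lo I - x
  else if Rlt_dec (hi I) x then x - hi I else 0.

(** Cantor intervals are indexed by words w : list bool (true = right child),
    read from the root; generation = length w. *)
Fixpoint words (k : nat) : list (list bool) :=
  match k with
  | O => [ [] ]
  | S k' => flat_map (fun w => [false :: w; true :: w]) (words k')
  end.

(** left endpoint of I_w, where d is the generation of the current parent *)
Fixpoint lep (N : nat) (d : nat) (w : list bool) : R :=
  match w with
  | [] => 0
  | b :: w' => (if b then (/ INR N) ^ d - (/ INR N) ^ (S d) else 0) + lep N (S d) w'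
  end.

Definition cleft (N : nat) (w : list bool) : R := lep N 0 w.
Definition clen (N : nat) (w : list bool) : R := (/ INR N) ^ (length w).

Definition in_cantor (N : nat) (w : list bool) (x : R) : Prop :=
  cleft N w <= x <= cleft N w + clen N w.

Definition center (N : nat) (w : list bool) : R := cleft N w + clen N w / 2.

Definition in_E (N : nat) (x : R) : Prop :=
  forall k : nat, exists w, length w = k /\ in_cantor N w x.

(** redistributed Cantor measure of I_w; prev = last bit of the parent word *)
Definition ofactor (N : nat) (prev : option bool) (b : bool) : R :=
  match prev with
  | None => / 2
  | Some p => if Bool.eqb p b then (1 + / INR N) / 2 else (1 - / INR N) / 2
  end.

Fixpoint om (N : nat) (prev : option bool) (w : list bool) : R :=
  match w with
  | [] => 1
  | b :: w' => ofactor N prev b * om N (Some b) w'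
  end.

Definition omega_hat (N : nat) (w : list bool) : R := om N None w.

Definition sweight (N : nat) (w : list bool) : R :=
  (/ INR N) ^ (2 * length w) / omega_hat N w.

(** Partial sums of sigma_hat(A) over generations <= K. *)
Definition sigma_part (N : nat) (K : nat) (A : R -> Prop) : R :=
  lsum (fun k => lsum (fun w => sweight N w * ind (A (center N w))) (words k))
       (seq 0 (S K)).

(** S is an upper bound of sigma_hat(A) (which may a priori be +infinity). *)
Definition sigma_le (N : nat) (A : R -> Prop) (S : R) : Prop :=
  forall K, sigma_part N K A <= S.

(** c <= (M (1_Q sigma_hat)(x))^2 * 1_Q(x), where
    M mu(x) = sup_{J interval containing x} mu(J)/|J|. *)
Definition below_max_sq (N : nat) (Q : interval) (x c : R) : Prop :=
  c <= 0 \/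
  (in_ival Q x /\
   forall t, 0 <= t -> t * t < c ->
     exists J : interval, nondeg J /\ in_ival J x /\
       exists K, t * len J < sigma_part N K (fun y => in_ival Q y /\ in_ival J y)).

(** Lower approximation at generation k of omega_hat(J) (inner approximation). *)
Definition omega_low (N : nat) (k : nat) (J : interval) : R :=
  lsum (fun w => omega_hat N w * ind (forall x, in_cantor N w x -> in_ival J x))
       (words k).

(** Partial sums (generations <= K) of P(I, 1_{I0} sigma_hat). *)
Definition poisson_part (N : nat) (K : nat) (I I0 : interval) : R :=
  lsum (fun k => lsum (fun w =>
     sweight N w * ind (in_ival I0 (center N w)) *
       (len I / (len I + dist_int (center N w) I) ^ 2)) (words k))
    (seq 0 (S K)).

(** I0 is the disjoint union of the nonempty nondegenerate intervals Ir r
    (None = unused index, allowing finite decompositions). *)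
Definition decomposition (I0 : interval) (Ir : nat -> option interval) : Prop :=
  (forall r I, Ir r = Some I -> nondeg I) /\
  (forall x, in_ival I0 x <-> exists r I, Ir r = Some I /\ in_ival I x) /\
  (forall r r' I I', r <> r' -> Ir r = Some I -> Ir r' = Some I' ->
     forall x, in_ival I x -> in_ival I' x -> False).

Definition packing_term (N : nat) (k K : nat) (I0 : interval) (o : option interval) : R :=
  match o with
  | None => 0
  | Some J => omega_low N k J * (poisson_part N K J I0) ^ 2
  end.

(* Let [v] be the shortest word whose centre lies in [Q], and [q = 1/N]. Cantor intervals
   are nested and the two children of [I_p] are separated by a gap around its centre, so
   every centre in [Q] is that of a descendant of [v], and [σ̂(Q) >= s_v = q^(2|v|)/ω̂(I_v)].
   A point [x] of the Cantor set stays at distance [>= q^|u|/4] from the centre of every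
   [I_u], so an interval [J ∋ x] only sees atoms with [q^|u| <= 4|J|]; since [ω̂] gives each
   child at least [(1-q)/2] of its parent's mass, the sums of [q^k/ω̂(I_u)] over the
   descendants [u] of [v] of generation [k] decay like [(4/15)^(k-|v|)].  Hence
   [M(1_Q σ̂)] and [P(J, 1_Q σ̂)] are bounded on the Cantor set by
   [B = (60/11) q^|v|/ω̂(I_v)], and both (a) and (b) are at most
   [B^2 ω̂(I_v) <= 30 s_v <= 30 σ̂(Q)]. *)

From Stdlib Require Import Reals List Lra Lia Wf_nat Classical ClassicalEpsilon.
(* [Defs] comes after [Reals], which exports an unrelated [ind]. *)
From Pilot Require Import Defs.
Import ListNotations.
Open Scope R_scope.

Section ListSums.

Context {A : Type}.

Lemma lsum_app (f : A -> R) l1 l2 : lsum f (l1 ++ l2) = lsum f l1 + lsum f l2.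
Proof. induction l1 as [|a l1 IH]; simpl; [lra|]. unfold lsum in *; simpl. rewrite IH; lra. Qed.

Lemma lsum_le (f g : A -> R) l :
  (forall x, In x l -> f x <= g x) -> lsum f l <= lsum g l.
Proof.
  induction l as [|a l IH]; intros H; unfold lsum in *; simpl in *; [lra|].
  pose proof (H a (or_introl eq_refl)). pose proof (IH (fun x h => H x (or_intror h))). lra.
Qed.

Lemma lsum_ext (f g : A -> R) l : (forall x, In x l -> f x = g x) -> lsum f l = lsum g l.
Proof. intros H. apply Rle_antisym; apply lsum_le; intros x Hx; rewrite (H x Hx); lra. Qed.

Lemma lsum_const0 (l : list A) : lsum (fun _ => 0) l = 0.
Proof. induction l as [|a l IH]; [reflexivity|]. unfold lsum in *; simpl. rewrite IH; lra. Qed.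

Lemma lsum_nonneg (f : A -> R) l : (forall x, In x l -> 0 <= f x) -> 0 <= lsum f l.
Proof. intros H. rewrite <- (lsum_const0 l). now apply lsum_le. Qed.

Lemma lsum_nonpos (f : A -> R) l : (forall x, In x l -> f x <= 0) -> lsum f l <= 0.
Proof. intros H. rewrite <- (lsum_const0 l). now apply lsum_le. Qed.

Lemma lsum_plus (f g : A -> R) l : lsum (fun x => f x + g x) l = lsum f l + lsum g l.
Proof. induction l; unfold lsum in *; simpl in *; lra. Qed.

Lemma lsum_scal (c : R) (f : A -> R) l : lsum (fun x => c * f x) l = c * lsum f l.
Proof. induction l as [|a l IH]; unfold lsum in *; simpl in *; [lra|]. rewrite IH; ring. Qed.

Lemma lsum_ge_term (f : A -> R) l a :
  In a l -> (forall x, In x l -> 0 <= f x) -> f a <= lsum f l.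
Proof.
  induction l as [|b l IH]; intros Hin H; [contradiction|]. unfold lsum; simpl.
  fold (lsum f l). pose proof (H b (or_introl eq_refl)).
  pose proof (lsum_nonneg f l (fun x h => H x (or_intror h))).
  destruct Hin as [<-|Hin]; [lra|].
  pose proof (IH Hin (fun x h => H x (or_intror h))). lra.
Qed.

Lemma lsum_pos_exists (f : A -> R) l : 0 < lsum f l -> exists a, In a l /\ 0 < f a.
Proof.
  intros H. apply NNPP; intros Hnone.
  enough (lsum f l <= 0) by lra.
  apply lsum_nonpos. intros x Hx. apply Rnot_lt_le. intros Hfx. eauto.
Qed.

Lemma lsum_le1_at_most_one_pos (g : A -> R) l : NoDup l ->
  (forall a, In a l -> 0 <= g a <= 1) ->
  (forall a b, In a l -> In b l -> a <> b -> 0 < g a -> 0 < g b -> False) ->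
  lsum g l <= 1.
Proof.
  induction l as [|a l IH]; intros Hnd H01 Huniq; unfold lsum; simpl; [lra|]. fold (lsum g l).
  inversion Hnd as [|? ? Ha Hnd']; subst.
  destruct (Rle_lt_dec (g a) 0) as [Hle|Hpos].
  - enough (lsum g l <= 1) by lra.
    apply IH; [exact Hnd' | intros b Hb; apply H01; now right |].
    intros b c Hb Hc; apply Huniq; now right.
  - enough (lsum g l <= 0) by (pose proof (H01 a (or_introl eq_refl)); lra).
    apply lsum_nonpos. intros b Hb. apply Rnot_lt_le. intros Hgb.
    apply (Huniq a b); simpl; auto. intros ->; contradiction.
Qed.

End ListSums.

Lemma lsum_swap {A B : Type} (f : A -> B -> R) l1 l2 :
  lsum (fun a => lsum (f a) l2) l1 = lsum (fun b => lsum (fun a => f a b) l1) l2.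
Proof.
  induction l1 as [|a l1 IH]; simpl.
  - symmetry. apply lsum_const0.
  - change (lsum (f a) l2 + lsum (fun a => lsum (f a) l2) l1
            = lsum (fun b => f a b + lsum (fun a => f a b) l1) l2).
    now rewrite IH, lsum_plus.
Qed.

Lemma lsum_flat_map {A B : Type} (f : B -> R) (g : A -> list B) l :
  lsum f (flat_map g l) = lsum (fun a => lsum f (g a)) l.
Proof.
  induction l as [|a l IH]; [reflexivity|]. simpl flat_map. rewrite lsum_app, IH. reflexivity.
Qed.


Lemma lsum_seq_geometric (g : nat -> R) (c r : R) (j : nat) :
  0 <= c -> 0 <= r < 1 ->
  (forall k, (k < j)%nat -> g k = 0) ->
  (forall k, (j <= k)%nat -> g k <= c * r ^ (k - j)) ->
  forall n a, lsum g (seq a n) <= c / (1 - r) * r ^ (a - j).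
Proof.
  intros Hc Hr Hlow Hhigh. assert (Hc' : 0 <= c / (1 - r)) by (apply Rle_mult_inv_pos; lra).
  induction n as [|n IH]; intros a.
  - apply Rmult_le_pos; [lra | apply pow_le; lra].
  - change (g a + lsum g (seq (S a) n) <= c / (1 - r) * r ^ (a - j)). specialize (IH (S a)). destruct (Nat.lt_ge_cases a j) as [Ha|Ha].
    + rewrite Hlow by exact Ha. replace (S a - j)%nat with 0%nat in IH by lia.
      replace (a - j)%nat with 0%nat by lia. lra.
    + replace (S a - j)%nat with (S (a - j)) in IH by lia. simpl in IH.
      pose proof (Hhigh a Ha). assert (0 <= r ^ (a - j)) by (apply pow_le; lra).
      assert (c * r ^ (a - j) + c / (1 - r) * (r * r ^ (a - j)) = c / (1 - r) * r ^ (a - j))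
        by (field; lra).
      lra.
Qed.

Lemma ind_true (P : Prop) : P -> ind P = 1.
Proof. unfold ind; destruct excluded_middle_informative; tauto. Qed.

Lemma ind_false (P : Prop) : ~ P -> ind P = 0.
Proof. unfold ind; destruct excluded_middle_informative; tauto. Qed.

Lemma ind_bounds (P : Prop) : 0 <= ind P <= 1.
Proof. unfold ind; destruct excluded_middle_informative; lra. Qed.

Lemma ind_pos (P : Prop) : 0 < ind P -> P.
Proof. unfold ind; destruct excluded_middle_informative; [auto | lra]. Qed.

Lemma pow_le_pow_of_le1 (x : R) (m n : nat) : 0 <= x <= 1 -> (m <= n)%nat -> x ^ n <= x ^ m.
Proof.
  intros Hx Hmn. replace n with (m + (n - m))%nat by lia. rewrite pow_add.
  assert (0 <= x ^ m) by (apply pow_le; lra).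
  enough (x ^ (n - m) <= 1) by nra.
  induction (n - m)%nat as [|d IH]; simpl; [lra|]. assert (0 <= x ^ d) by (apply pow_le; lra). nra.
Qed.

Lemma in_ival_convex (I : interval) x y z : in_ival I x -> in_ival I y -> x <= z <= y -> in_ival I z.
Proof. unfold in_ival. destruct (lo_closed I), (hi_closed I); intros; lra. Qed.

Lemma in_ival_bounds (I : interval) x : in_ival I x -> lo I <= x <= hi I.
Proof. unfold in_ival. destruct (lo_closed I), (hi_closed I); intros; lra. Qed.

Lemma len_nonneg (I : interval) x : in_ival I x -> 0 <= len I.
Proof. intros H. apply in_ival_bounds in H. unfold len. lra. Qed.

Lemma dist_int_bounds (I : interval) z x : in_ival I x ->
  0 <= dist_int z I /\ x - (len I + dist_int z I) <= z <= x + (len I + dist_int z I).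
Proof.
  intros H. apply in_ival_bounds in H. unfold dist_int, len.
  destruct (Rlt_dec z (lo I)); [|destruct (Rlt_dec (hi I) z)]; lra.
Qed.

Lemma poisson_kernel_le (l D a : R) : 0 <= l <= D -> 0 < a <= D -> l / D ^ 2 <= / a.
Proof.
  intros Hl Ha. apply Rle_trans with (/ D).
  - replace (/ D) with (D / D ^ 2) by (field; lra).
    apply Rmult_le_compat_r; [|lra]. left; apply Rinv_0_lt_compat; nra.
  - apply Rinv_le_contravar; lra.
Qed.

Lemma words_length k w : In w (words k) -> length w = k.
Proof.
  revert w; induction k as [|k IH]; simpl; intros w H.
  - destruct H as [<-|[]]; reflexivity.
  - apply in_flat_map in H. destruct H as [w' [Hw' Hw]].
    destruct Hw as [<-|[<-|[]]]; simpl; f_equal; auto.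
Qed.

Lemma in_words_length w : In w (words (length w)).
Proof.
  induction w as [|b w IH]; simpl; [auto|]. apply in_flat_map. exists w; split; auto.
  destruct b; simpl; auto.
Qed.

Lemma lsum_words_S (f : list bool -> R) k :
  lsum f (words (S k)) = lsum (fun w => f (false :: w) + f (true :: w)) (words k).
Proof. simpl. rewrite lsum_flat_map. apply lsum_ext. intros. unfold lsum; simpl; lra. Qed.

Definition prefix (v w : list bool) : Prop := exists u, w = v ++ u.

Lemma prefix_cons b v c w : prefix (b :: v) (c :: w) <-> b = c /\ prefix v w.
Proof.
  unfold prefix; split.
  - intros [u Hu]. injection Hu as -> ->. eauto.
  - intros [-> [u ->]]. now exists u.
Qed.

Lemma lsum_words_prefix v : forall (f : list bool -> R) m,
  lsum (fun w => f w * ind (prefix v w)) (words (length v + m))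
  = lsum (fun u => f (v ++ u)) (words m).
Proof.
  induction v as [|b v IH]; intros f m.
  - apply lsum_ext. intros u _. rewrite ind_true by now exists u. simpl; ring.
  - simpl (length (b :: v) + m)%nat. rewrite lsum_words_S, <- (IH (fun w => f (b :: w))).
    apply lsum_ext. intros w _.
    assert (Hpre : forall c, ind (prefix (b :: v) (c :: w)) = if Bool.eqb b c then ind (prefix v w) else 0).
    { intros c. destruct (Bool.eqb b c) eqn:E.
      - apply Bool.eqb_prop in E as ->. unfold ind.
        do 2 destruct excluded_middle_informative; try reflexivity;
          exfalso; rewrite prefix_cons in *; tauto.
      - apply ind_false. rewrite prefix_cons. intros [-> _]. now rewrite Bool.eqb_reflx in E. }
    rewrite !Hpre. destruct b; simpl; ring.
Qed.

Lemma lsum_words_prefix_short v k (f : list bool -> R) : (k < length v)%nat ->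
  lsum (fun w => f w * ind (prefix v w)) (words k) = 0.
Proof.
  intros Hk. rewrite <- (lsum_const0 (words k)). apply lsum_ext. intros w Hw.
  rewrite ind_false; [ring|]. intros [u ->].
  apply words_length in Hw. rewrite length_app in Hw. lia.
Qed.

Lemma first_difference : forall w1 w2 : list bool, length w1 = length w2 -> w1 <> w2 ->
  exists p a b c, w1 = p ++ c :: a /\ w2 = p ++ negb c :: b.
Proof.
  induction w1 as [|x w1 IH]; intros [|y w2] Hl Hne; simpl in Hl; try discriminate.
  - easy.
  - destruct (Bool.bool_dec x y) as [<-|Hxy].
    + destruct (IH w2) as [p [a [b [c [-> ->]]]]]; [lia | congruence |].
      now exists (x :: p), a, b, c.
    + exists [], w1, w2, x. split; [reflexivity|]. destruct x, y; simpl; congruence.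
Qed.

Section Cantor.

Variable N : nat.
Hypothesis HN : (16 <= N)%nat.

Local Notation q := (/ INR N).

Lemma q_bounds : 0 < q /\ q <= / 16.
Proof.
  apply le_INR in HN. replace (INR 16) with 16 in HN by (simpl; ring).
  split; [apply Rinv_0_lt_compat | apply Rinv_le_contravar]; lra.
Qed.

Lemma q_pow_pos n : 0 < q ^ n.
Proof. apply pow_lt, q_bounds. Qed.

Lemma q_pow_le n m : (n <= m)%nat -> q ^ m <= q ^ n.
Proof. apply pow_le_pow_of_le1. pose proof q_bounds. lra. Qed.

Lemma q_mul_pow_le n : q * q ^ n <= / 16 * q ^ n.
Proof. apply Rmult_le_compat_r; [left; apply q_pow_pos | apply q_bounds]. Qed.

Lemma lep_app d w u : lep N d (w ++ u) = lep N d w + lep N (d + length w) u.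
Proof.
  revert d; induction w as [|b w IH]; intros d; simpl.
  - rewrite Nat.add_0_r; ring.
  - rewrite IH, Nat.add_succ_r. simpl. ring.
Qed.

Lemma lep_bounds u d : 0 <= lep N d u <= q ^ d - q ^ (d + length u).
Proof.
  revert d; induction u as [|b u IH]; intros d; simpl.
  - rewrite Nat.add_0_r; lra.
  - destruct (IH (S d)) as [h1 h2]. rewrite Nat.add_succ_r.
    pose proof (q_pow_le d (S d) (Nat.le_succ_diag_r d)). simpl in *. destruct b; lra.
Qed.

Lemma in_cantor_app w u x : in_cantor N (w ++ u) x -> in_cantor N w x.
Proof.
  unfold in_cantor, cleft, clen. rewrite lep_app, length_app. simpl.
  pose proof (lep_bounds u (length w)). lra.
Qed.

Lemma cleft_snoc w b :
  cleft N (w ++ [b]) = cleft N w + (if b then q ^ length w - q ^ S (length w) else 0).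
Proof. unfold cleft. rewrite lep_app. simpl. ring. Qed.

Lemma in_cantor_child w b u x : in_cantor N (w ++ b :: u) x ->
  if b then cleft N w + q ^ length w - q ^ S (length w) <= x <= cleft N w + q ^ length w
  else cleft N w <= x <= cleft N w + q ^ S (length w).
Proof.
  replace (w ++ b :: u) with ((w ++ [b]) ++ u) by now rewrite <- app_assoc.
  intros H. apply in_cantor_app in H. unfold in_cantor, clen in H.
  rewrite cleft_snoc, length_app, Nat.add_1_r in H. destruct b; lra.
Qed.

(* Each child of [I_p] lies within [q^(|p|+1) <= q^|p|/16] of an endpoint of [I_p]. *)
Lemma children_separated p c a b x y :
  in_cantor N (p ++ c :: a) x -> in_cantor N (p ++ negb c :: b) y ->
  let z := center N p in let g := 7 / 16 * q ^ length p in
  (x + g <= z /\ z + g <= y) \/ (y + g <= z /\ z + g <= x).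
Proof.
  intros Hx Hy z g. apply in_cantor_child in Hx. apply in_cantor_child in Hy.
  unfold z, g, center, clen. pose proof (q_pow_pos (length p)).
  pose proof (q_mul_pow_le (length p)).
  destruct c; simpl in *; lra.
Qed.

Lemma cleft_in_cantor w : in_cantor N w (cleft N w).
Proof. unfold in_cantor, clen. pose proof (q_pow_pos (length w)). lra. Qed.

Lemma center_in_cantor w : in_cantor N w (center N w).
Proof. unfold in_cantor, center, clen. pose proof (q_pow_pos (length w)). lra. Qed.

Lemma in_E_cleft w : in_E N (cleft N w).
Proof.
  intros k. set (W := w ++ repeat false k).
  assert (HW : cleft N W = cleft N w).
  { unfold W, cleft. rewrite lep_app. enough (forall n d, lep N d (repeat false n) = 0) as ->
      by ring.
    induction n as [|n IH]; intros d; simpl; [reflexivity|]. rewrite IH; ring. }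
  exists (firstn k W). split.
  - apply firstn_length_le. unfold W. rewrite length_app, repeat_length. lia.
  - apply (in_cantor_app _ (skipn k W)). rewrite firstn_skipn, <- HW. apply cleft_in_cantor.
Qed.

Lemma center_far_from_E x u : in_E N x ->
  x + q ^ length u / 4 <= center N u \/ center N u + q ^ length u / 4 <= x.
Proof.
  intros HE. destruct (HE (S (length u))) as [w [Hlen Hx]].
  rewrite <- (firstn_skipn (length u) w) in Hx.
  assert (Hl : length (firstn (length u) w) = length u) by (apply firstn_length_le; lia).
  pose proof (q_pow_pos (length u)).
  destruct (list_eq_dec Bool.bool_dec (firstn (length u) w) u) as [Heq|Hne].
  - assert (length (skipn (length u) w) = 1%nat) by (rewrite length_skipn; lia).
    destruct (skipn (length u) w) as [|b [|]]; simpl in *; try lia.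
    rewrite Heq in Hx. apply in_cantor_child in Hx. simpl in Hx.
    unfold center, clen. pose proof (q_mul_pow_le (length u)). destruct b; lra.
  - destruct (first_difference _ _ Hl Hne) as [p [a [b [c [Hw Hu]]]]].
    apply in_cantor_app in Hx. rewrite Hw in Hx.
    pose proof (center_in_cantor u) as Hc. rewrite Hu in Hc.
    pose proof (children_separated p c a b _ _ Hx Hc) as Hsep. simpl in Hsep.
    assert (q ^ length u <= q ^ length p)
      by (apply q_pow_le; rewrite Hu, length_app; simpl; lia).
    rewrite <- Hu in Hsep. lra.
Qed.

(* The two children's left endpoints lie in [E] and straddle the centre. *)
Lemma center_in_of_cell_E_in (Q : interval) w :
  (forall x, in_cantor N w x -> in_E N x -> in_ival Q x) -> in_ival Q (center N w).
Proof.
  intros H.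
  assert (Hchild : forall b, in_ival Q (cleft N (w ++ [b]))).
  { intros b. apply H; [apply (in_cantor_app _ [b]), cleft_in_cantor | apply in_E_cleft]. }
  apply (in_ival_convex Q _ _ _ (Hchild false) (Hchild true)).
  rewrite !cleft_snoc. unfold center, clen. simpl.
  pose proof (q_pow_pos (length w)). pose proof (q_mul_pow_le (length w)). lra.
Qed.

Lemma center_between v u : (length v <= length u)%nat -> firstn (length v) u <> v ->
  exists p, (length p < length v)%nat /\
    (center N v <= center N p <= center N u \/ center N u <= center N p <= center N v).
Proof.
  intros Hl Hne.
  assert (Hl1 : length (firstn (length v) u) = length v) by (apply firstn_length_le; lia).
  destruct (first_difference _ _ Hl1 Hne) as [p [a [b [c [Hu Hv]]]]].
  exists p. split; [rewrite Hv, length_app; simpl; lia|].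
  pose proof (center_in_cantor u) as Hcu. set (cu := center N u) in Hcu |- *.
  rewrite <- (firstn_skipn (length v) u) in Hcu.
  apply in_cantor_app in Hcu. rewrite Hu in Hcu.
  pose proof (center_in_cantor v) as Hcv. rewrite Hv in Hcv.
  pose proof (children_separated p c a b _ _ Hcu Hcv) as Hsep. simpl in Hsep.
  pose proof (q_pow_pos (length p)). rewrite <- Hv in Hsep. lra.
Qed.


Definition top_word (Q : interval) (v : list bool) : Prop :=
  in_ival Q (center N v) /\ forall u, in_ival Q (center N u) -> (length v <= length u)%nat.

Lemma top_word_exists (Q : interval) :
  (exists u, in_ival Q (center N u)) -> exists v, top_word Q v.
Proof.
  intros [u Hu].
  destruct (dec_inh_nat_subset_has_unique_least_element
              (fun j => exists u, length u = j /\ in_ival Q (center N u)))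
    as [j [[[v [<- Hv]] Hmin] _]].
  - intros n; apply classic.
  - eauto.
  - exists v. split; [exact Hv|]. intros u' Hu'. apply Hmin. eauto.
Qed.

(* A shorter centre between two centres of [Q] would lie in [Q] by convexity. *)
Lemma top_word_prefix (Q : interval) v u :
  top_word Q v -> in_ival Q (center N u) -> prefix v u.
Proof.
  intros [Hv Hmin] Hu. pose proof (Hmin u Hu) as Hl.
  destruct (list_eq_dec Bool.bool_dec (firstn (length v) u) v) as [Heq|Hne].
  - exists (skipn (length v) u). rewrite <- Heq at 1. symmetry; apply firstn_skipn.
  - destruct (center_between v u Hl Hne) as [p [Hp Hbetween]].
    enough (in_ival Q (center N p)) by (specialize (Hmin p H); lia).
    destruct Hbetween; [apply (in_ival_convex Q (center N v) (center N u))
                      | apply (in_ival_convex Q (center N u) (center N v))]; auto.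
Qed.

Lemma ofactor_ge p b : (1 - q) / 2 <= ofactor N p b.
Proof. pose proof q_bounds. destruct p as [p|]; simpl; [destruct (Bool.eqb p b)|]; lra. Qed.

Lemma ofactor_pos p b : 0 < ofactor N p b.
Proof. pose proof (ofactor_ge p b). pose proof q_bounds. lra. Qed.

Lemma q_div_ofactor_le p b : q / ofactor N p b <= 2 / 15.
Proof.
  pose proof (ofactor_ge p b). pose proof q_bounds.
  apply Rle_trans with (/ 16 / (15 / 32)); [|lra].
  apply Rmult_le_compat; try lra; [left; apply Rinv_0_lt_compat, ofactor_pos|].
  apply Rinv_le_contravar; lra.
Qed.

Lemma om_pos w p : 0 < om N p w.
Proof.
  revert p; induction w as [|b w IH]; intros p; simpl; [lra|].
  apply Rmult_lt_0_compat; [apply ofactor_pos | apply IH].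
Qed.

Lemma omega_hat_pos w : 0 < omega_hat N w.
Proof. apply om_pos. Qed.

Fixpoint last_bit (p : option bool) (w : list bool) : option bool :=
  match w with [] => p | b :: w' => last_bit (Some b) w' end.

Lemma om_app v : forall p u, om N p (v ++ u) = om N p v * om N (last_bit p v) u.
Proof. induction v as [|b v IH]; intros p u; simpl; [ring|]. rewrite IH; ring. Qed.

Lemma om_words_sum m : forall p, lsum (om N p) (words m) = 1.
Proof.
  induction m as [|m IH]; intros p.
  - unfold lsum; simpl; ring.
  - rewrite lsum_words_S. simpl.
    rewrite lsum_plus, !lsum_scal, !IH. destruct p as [[]|]; simpl; lra.
Qed.

Lemma inv_om_words_sum_le m : forall p, lsum (fun u => q ^ m / om N p u) (words m) <= (4 / 15) ^ m.
Proof.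
  induction m as [|m IH]; intros p.
  - unfold lsum; simpl. lra.
  - rewrite lsum_words_S.
    assert (Hstep : forall b u, q ^ S m / om N p (b :: u)
                                = q / ofactor N p b * (q ^ m / om N (Some b) u)).
    { intros b u. simpl. unfold Rdiv. rewrite Rinv_mult. ring. }
    apply Rle_trans with
      (lsum (fun u => 2 / 15 * (q ^ m / om N (Some false) u) + 2 / 15 * (q ^ m / om N (Some true) u))
            (words m)).
    + apply lsum_le. intros u _. rewrite !Hstep.
      assert (Hnn : forall b, 0 <= q ^ m / om N (Some b) u)
        by (intros b; apply Rle_mult_inv_pos; [left; apply q_pow_pos | apply om_pos]).
      pose proof (Hnn false); pose proof (Hnn true).
      apply Rplus_le_compat; apply Rmult_le_compat_r; auto; apply q_div_ofactor_le.
    + rewrite lsum_plus, !lsum_scal. pose proof (IH (Some false)). pose proof (IH (Some true)).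
      simpl. lra.
Qed.

Lemma omega_subtree_le v k :
  lsum (fun w => omega_hat N w * ind (prefix v w)) (words k) <= omega_hat N v.
Proof.
  pose proof (omega_hat_pos v). destruct (Nat.lt_ge_cases k (length v)) as [Hk|Hk].
  - rewrite lsum_words_prefix_short by exact Hk. lra.
  - replace k with (length v + (k - length v))%nat by lia. rewrite lsum_words_prefix.
    unfold omega_hat. rewrite (lsum_ext _ (fun u => om N None v * om N (last_bit None v) u))
      by (intros; apply om_app).
    rewrite lsum_scal, om_words_sum. lra.
Qed.

Definition density (v : list bool) : R := q ^ length v / omega_hat N v.

Definition subtree_density (v : list bool) (k : nat) : R :=
  lsum (fun u => q ^ k / omega_hat N u * ind (prefix v u)) (words k).

(* Bounds [M(1_Q σ̂)] and [P(J, 1_Q σ̂)] on [E]: the factor [4] comes from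
   [center_far_from_E] and [15/11 = 1/(1 - 4/15)] from [subtree_density_le]. *)
Definition max_bound (v : list bool) : R := 60 / 11 * density v.

Lemma density_nonneg v : 0 <= density v.
Proof. apply Rle_mult_inv_pos; [left; apply q_pow_pos | apply omega_hat_pos]. Qed.

Lemma sweight_eq w : sweight N w = q ^ length w * density w.
Proof.
  unfold sweight, density. replace (2 * length w)%nat with (length w + length w)%nat by lia.
  rewrite pow_add. unfold Rdiv. ring.
Qed.

Lemma sweight_nonneg w : 0 <= sweight N w.
Proof. rewrite sweight_eq. apply Rmult_le_pos; [left; apply q_pow_pos | apply density_nonneg]. Qed.

Lemma subtree_density_term_nonneg v k u : 0 <= q ^ k / omega_hat N u * ind (prefix v u).
Proof.
  apply Rmult_le_pos; [|apply ind_bounds].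
  apply Rle_mult_inv_pos; [left; apply q_pow_pos | apply omega_hat_pos].
Qed.

Lemma subtree_density_le v k : (length v <= k)%nat ->
  subtree_density v k <= density v * (4 / 15) ^ (k - length v).
Proof.
  intros Hk. unfold subtree_density. set (m := (k - length v)%nat).
  replace k with (length v + m)%nat by (unfold m; lia).
  rewrite (lsum_words_prefix v (fun u => q ^ (length v + m) / omega_hat N u)).
  rewrite (lsum_ext _ (fun u => density v * (q ^ m / om N (last_bit None v) u))).
  - rewrite lsum_scal. apply Rmult_le_compat_l; [apply density_nonneg | apply inv_om_words_sum_le].
  - intros u _. unfold density, omega_hat. rewrite om_app, pow_add. unfold Rdiv.
    rewrite Rinv_mult. ring.
Qed.

Lemma sum_subtree_density_le v K :
  lsum (subtree_density v) (seq 0 (S K)) <= density v * (15 / 11).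
Proof.
  pose proof (lsum_seq_geometric (subtree_density v) (density v) (4 / 15) (length v)
                (density_nonneg v) ltac:(lra)) as Hgeom.
  replace (density v * (15 / 11)) with (density v / (1 - 4 / 15) * (4 / 15) ^ (0 - length v))
    by (simpl; field).
  apply Hgeom; [|apply subtree_density_le].
  intros k Hk. apply lsum_words_prefix_short, Hk.
Qed.

(* Each atom of [Q ∩ J] sits at the centre of a descendant [u] of [v] with [q^|u| <= 4|J|]. *)
Lemma sigma_window_le (Q J : interval) v x K :
  top_word Q v -> in_E N x -> in_ival J x ->
  sigma_part N K (fun y => in_ival Q y /\ in_ival J y) <= len J * max_bound v.
Proof.
  intros Htop HE HJ. unfold sigma_part, max_bound. pose proof (len_nonneg J x HJ).
  apply Rle_trans with (lsum (fun k => 4 * len J * subtree_density v k) (seq 0 (S K))).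
  - apply lsum_le. intros k _. unfold subtree_density. rewrite <- lsum_scal. apply lsum_le.
    intros w Hw. apply words_length in Hw as <-.
    pose proof (subtree_density_term_nonneg v (length w) w).
    destruct (classic (in_ival Q (center N w) /\ in_ival J (center N w))) as [[HQ HJw]|Hout].
    + rewrite ind_true by now split.
      rewrite (ind_true (prefix v w)) by (eapply top_word_prefix; eauto).
      rewrite sweight_eq. unfold density.
      assert (q ^ length w <= 4 * len J).
      { pose proof (center_far_from_E x w HE). pose proof (in_ival_bounds J x HJ).
        pose proof (in_ival_bounds J _ HJw). unfold len. lra. }
      pose proof (density_nonneg w). unfold density in *. nra.
    + rewrite ind_false by exact Hout. nra.
  - rewrite lsum_scal. pose proof (sum_subtree_density_le v K). nra.
Qed.

Lemma poisson_part_bounds (I0 J : interval) v x K :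
  top_word I0 v -> in_E N x -> in_ival J x ->
  0 <= poisson_part N K J I0 <= max_bound v.
Proof.
  intros Htop HE HJ. unfold poisson_part, max_bound.
  assert (HD : forall w, q ^ length w / 4 <= len J + dist_int (center N w) J
                         /\ len J <= len J + dist_int (center N w) J).
  { intros w. pose proof (dist_int_bounds J (center N w) x HJ).
    pose proof (center_far_from_E x w HE). lra. }
  assert (HDpos : forall w, 0 < len J + dist_int (center N w) J).
  { intros w. pose proof (HD w). pose proof (q_pow_pos (length w)). lra. }
  split.
  - apply lsum_nonneg; intros k _; apply lsum_nonneg; intros w _.
    apply Rmult_le_pos; [apply Rmult_le_pos; [apply sweight_nonneg | apply ind_bounds]|].
    apply Rle_mult_inv_pos; [apply (len_nonneg J x HJ) | apply pow_lt, HDpos].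
  - apply Rle_trans with (lsum (fun k => 4 * subtree_density v k) (seq 0 (S K))).
    + apply lsum_le. intros k _. unfold subtree_density. rewrite <- lsum_scal. apply lsum_le.
      intros w Hw. apply words_length in Hw as <-.
      pose proof (subtree_density_term_nonneg v (length w) w).
      destruct (classic (in_ival I0 (center N w))) as [HI0|Hout].
      * rewrite ind_true by exact HI0.
        rewrite (ind_true (prefix v w)) by (eapply top_word_prefix; eauto).
        pose proof (q_pow_pos (length w)).
        assert (Hker : len J / (len J + dist_int (center N w) J) ^ 2 <= / (q ^ length w / 4)).
        { pose proof (HD w). pose proof (len_nonneg J x HJ). apply poisson_kernel_le; lra. }
        rewrite sweight_eq, Rmult_1_r. unfold density in *.
        replace (4 * (q ^ length w / omega_hat N w * 1))
          with (q ^ length w * (q ^ length w / omega_hat N w) * / (q ^ length w / 4))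
          by (field; split; [apply Rgt_not_eq, omega_hat_pos | lra]).
        apply Rmult_le_compat_l; [|exact Hker].
        apply Rmult_le_pos; [lra | apply (density_nonneg w)].
      * rewrite ind_false by exact Hout. rewrite Rmult_0_r, Rmult_0_l. lra.
    + rewrite lsum_scal. pose proof (sum_subtree_density_le v K). lra.
Qed.

Lemma sigma_le_nonneg (A : R -> Prop) s : sigma_le N A s -> 0 <= s.
Proof.
  intros H. eapply Rle_trans; [|apply (H 0%nat)].
  apply lsum_nonneg; intros; apply lsum_nonneg; intros.
  apply Rmult_le_pos; [apply sweight_nonneg | apply ind_bounds].
Qed.

Lemma sweight_le_of_sigma_le (A : R -> Prop) s v :
  sigma_le N A s -> A (center N v) -> sweight N v <= s.
Proof.
  intros H Hv. eapply Rle_trans; [|apply (H (length v))]. unfold sigma_part.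
  assert (Hterm : forall w, 0 <= sweight N w * ind (A (center N w)))
    by (intros; apply Rmult_le_pos; [apply sweight_nonneg | apply ind_bounds]).
  eapply Rle_trans; [|apply (lsum_ge_term _ _ (length v))].
  - eapply Rle_trans; [|apply (lsum_ge_term _ _ v)].
    + cbv beta. rewrite ind_true by exact Hv. lra.
    + apply in_words_length.
    + intros; apply Hterm.
  - apply in_seq. lia.
  - intros; apply lsum_nonneg; intros; apply Hterm.
Qed.

Lemma max_bound_subtree_le (Q : interval) v s k :
  top_word Q v -> sigma_le N (in_ival Q) s ->
  max_bound v ^ 2 * lsum (fun w => omega_hat N w * ind (prefix v w)) (words k) <= 30 * s.
Proof.
  intros [Hv _] Hs.
  pose proof (sweight_le_of_sigma_le _ _ v Hs Hv). pose proof (omega_subtree_le v k).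
  pose proof (omega_hat_pos v). pose proof (sweight_nonneg v).
  assert (Hsq : max_bound v ^ 2 * omega_hat N v = 3600 / 121 * sweight N v).
  { rewrite sweight_eq. unfold max_bound, density. field. lra. }
  assert (0 <= max_bound v ^ 2) by apply pow2_ge_0. nra.
Qed.

Lemma below_max_sq_le (Q : interval) v x c :
  top_word Q v -> in_E N x -> below_max_sq N Q x c -> c <= max_bound v ^ 2.
Proof.
  intros Htop HE [Hc|[_ Hmax]]; [pose proof (pow2_ge_0 (max_bound v)); lra|].
  apply Rnot_lt_le. intros Hbig.
  assert (0 <= max_bound v) by (apply Rmult_le_pos; [lra | apply density_nonneg]).
  destruct (Hmax (max_bound v)) as [J [_ [HJ [K HK]]]]; [assumption | simpl in Hbig; lra |].
  pose proof (sigma_window_le Q J v x K Htop HE HJ). lra.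
Qed.

Lemma testing_condition (Q : interval) s k (c : list bool -> R) :
  sigma_le N (in_ival Q) s ->
  (forall w, length w = k -> forall x, in_cantor N w x -> in_E N x -> below_max_sq N Q x (c w)) ->
  lsum (fun w => omega_hat N w * c w) (words k) <= 30 * s.
Proof.
  intros Hs Hc. pose proof (sigma_le_nonneg _ _ Hs).
  assert (Hcenter : forall w, length w = k -> 0 < c w -> in_ival Q (center N w)).
  { intros w Hw Hpos. apply center_in_of_cell_E_in. intros x Hx HE.
    destruct (Hc w Hw x Hx HE) as [Hle|[HQ _]]; [lra | exact HQ]. }
  destruct (classic (exists u, in_ival Q (center N u))) as [Hex|Hnone].
  - destruct (top_word_exists Q Hex) as [v Htop].
    eapply Rle_trans; [|apply (max_bound_subtree_le Q v s k Htop Hs)].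
    rewrite <- lsum_scal. apply lsum_le. intros w Hw. apply words_length in Hw.
    pose proof (omega_hat_pos w). pose proof (pow2_ge_0 (max_bound v)).
    destruct (Rle_lt_dec (c w) 0) as [Hc0|Hc0].
    { assert (0 <= omega_hat N w * ind (prefix v w))
        by (apply Rmult_le_pos; [lra | apply ind_bounds]).
      nra. }
    rewrite ind_true by (eapply top_word_prefix; eauto).
    pose proof (below_max_sq_le Q v _ (c w) Htop (in_E_cleft w)
                  (Hc w Hw _ (cleft_in_cantor w) (in_E_cleft w))). nra.
  - apply Rle_trans with 0; [|lra]. apply lsum_nonpos. intros w Hw. apply words_length in Hw.
    pose proof (omega_hat_pos w).
    destruct (Rle_lt_dec (c w) 0) as [Hc0|Hc0]; [nra|].
    exfalso. eauto.
Qed.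

Definition cell_cover (o : option interval) (w : list bool) : R :=
  match o with
  | Some J => ind (forall x, in_cantor N w x -> in_ival J x)
  | None => 0
  end.

Lemma cell_cover_bounds o w : 0 <= cell_cover o w <= 1.
Proof. destruct o; simpl; [apply ind_bounds | lra]. Qed.

Lemma cell_cover_pos o w : 0 < cell_cover o w ->
  exists J, o = Some J /\ forall x, in_cantor N w x -> in_ival J x.
Proof. destruct o as [J|]; simpl; [|lra]. intros H. apply ind_pos in H. eauto. Qed.

Lemma packing_term_le (I0 : interval) v k K o : top_word I0 v ->
  packing_term N k K I0 o
  <= max_bound v ^ 2 * lsum (fun w => omega_hat N w * cell_cover o w) (words k).
Proof.
  intros Htop.
  assert (Hlow : 0 <= lsum (fun w => omega_hat N w * cell_cover o w) (words k)).
  { apply lsum_nonneg. intros w _.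
    apply Rmult_le_pos; [left; apply omega_hat_pos | apply cell_cover_bounds]. }
  destruct o as [J|]; simpl in *; [|pose proof (pow2_ge_0 (max_bound v)); nra].
  change (lsum _ (words k)) with (omega_low N k J) in *.
  destruct (Rle_lt_dec (omega_low N k J) 0) as [Hzero|Hpos].
  - replace (omega_low N k J) with 0 by lra. lra.
  - destruct (lsum_pos_exists _ _ Hpos) as [w [_ Hw]].
    assert (Hsub : forall x, in_cantor N w x -> in_ival J x).
    { apply ind_pos. pose proof (omega_hat_pos w). nra. }
    destruct (poisson_part_bounds I0 J v _ K Htop (in_E_cleft w) (Hsub _ (cleft_in_cantor w))).
    rewrite Rmult_comm. apply Rmult_le_compat_r; [lra | nra].
Qed.

(* The cells [I_r] are disjoint, so at most one of them contains [I_w]. *)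
Lemma cell_cover_sum_le (I0 : interval) Ir v w R0 :
  decomposition I0 Ir -> top_word I0 v ->
  lsum (fun r => cell_cover (Ir r) w) (seq 0 R0) <= ind (prefix v w).
Proof.
  intros [_ [Hcov Hdisj]] Htop.
  destruct (classic (exists r, In r (seq 0 R0) /\ 0 < cell_cover (Ir r) w)) as [[r [_ Hr]]|Hnone].
  - destruct (cell_cover_pos _ _ Hr) as [J [HJ Hsub]].
    rewrite ind_true.
    + apply lsum_le1_at_most_one_pos; [apply seq_NoDup | intros; apply cell_cover_bounds |].
      intros r1 r2 _ _ Hne H1 H2.
      destruct (cell_cover_pos _ _ H1) as [J1 [E1 S1]]. destruct (cell_cover_pos _ _ H2) as [J2 [E2 S2]].
      apply (Hdisj r1 r2 J1 J2 Hne E1 E2 (cleft N w)); [apply S1 | apply S2]; apply cleft_in_cantor.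
    + apply (top_word_prefix I0 v w Htop). apply Hcov. exists r, J. split; [exact HJ|].
      apply Hsub, center_in_cantor.
  - apply Rle_trans with 0; [|apply ind_bounds]. apply lsum_nonpos. intros r Hr.
    apply Rnot_lt_le. intros Hpos. eauto.
Qed.

Lemma poisson_part_no_center (I0 J : interval) K :
  ~ (exists u, in_ival I0 (center N u)) -> poisson_part N K J I0 = 0.
Proof.
  intros Hnone. unfold poisson_part. rewrite <- (lsum_const0 (seq 0 (S K))).
  apply lsum_ext. intros k _. rewrite <- (lsum_const0 (words k)).
  apply lsum_ext. intros w _. rewrite ind_false by eauto. ring.
Qed.

Lemma packing_condition (I0 : interval) Ir s R0 k K :
  decomposition I0 Ir -> sigma_le N (in_ival I0) s ->
  lsum (fun r => packing_term N k K I0 (Ir r)) (seq 0 R0) <= 30 * s.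
Proof.
  intros Hdec Hs. pose proof (sigma_le_nonneg _ _ Hs).
  destruct (classic (exists u, in_ival I0 (center N u))) as [Hex|Hnone].
  - destruct (top_word_exists I0 Hex) as [v Htop].
    eapply Rle_trans; [|apply (max_bound_subtree_le I0 v s k Htop Hs)].
    eapply Rle_trans; [apply lsum_le; intros r _; apply (packing_term_le I0 v k K _ Htop)|].
    rewrite lsum_scal, lsum_swap.
    apply Rmult_le_compat_l; [apply pow2_ge_0|]. apply lsum_le. intros w _.
    rewrite lsum_scal. apply Rmult_le_compat_l; [left; apply omega_hat_pos|].
    apply (cell_cover_sum_le I0 Ir v w R0 Hdec Htop).
  - apply Rle_trans with 0; [|lra]. apply lsum_nonpos. intros r _. unfold packing_term.
    destruct (Ir r) as [J|]; [|lra]. rewrite (poisson_part_no_center I0 J K Hnone). lra.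
Qed.

End Cantor.

Theorem mainTheorem10 :
  forall N : nat, (16 <= N)%nat ->
  exists C : R,
    (* (a) testing condition for the maximal function *)
    (forall Q : interval, nondeg Q ->
       forall S : R, sigma_le N (in_ival Q) S ->
       forall (k : nat) (c : list bool -> R),
         (forall w, length w = k -> forall x, in_cantor N w x -> in_E N x ->
            below_max_sq N Q x (c w)) ->
         lsum (fun w => omega_hat N w * c w) (words k) <= C * S) /\
    (* (b) pivotal / packing condition *)
    (forall (I0 : interval) (Ir : nat -> option interval),
       nondeg I0 -> decomposition I0 Ir ->
       forall S : R, sigma_le N (in_ival I0) S ->
       forall R0 k K : nat,
         lsum (fun r => packing_term N k K I0 (Ir r)) (seq 0 R0) <= C * S).
Proof.
  intros N HN. exists 30. split.
  - intros Q _ S HS k c Hc. exact (testing_condition N HN Q S k c HS Hc).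
  - intros I0 Ir _ Hdec S HS R0 k K. exact (packing_condition N HN I0 Ir S R0 k K Hdec HS).
Qed.
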